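(* Let $S=(\mathcal{E},\Sigma,X,\mathcal{O})$ be an entity and $e\in\mathcal{E}$. Then $\mathcal{F}(e)=\{F\subseteq\Sigma:\exists A\subseteq O(e),\ F=eig_e(A)\}$ is a closure system on $\Sigma$, i.e. $\emptyset\in\mathcal{F}(e)$, $\Sigma\in\mathcal{F}(e)$, and $\mathcal{F}(e)$ is closed under arbitrary intersections.
   Context: An entity $S=(\mathcal{E},\Sigma,X,\mathcal{O})$ consists of sets $\mathcal{E},\Sigma$ and for each $e\in\mathcal{E},p\in\Sigma$ a nonempty set $O(e,p)$, with $X=\bigcup O(e,p)$; $O(e)=\bigcup_{p\in\Sigma}O(e,p)$. The eigen map $eig_e:\mathcal{P}(O(e))\to\mathcal{P}(\Sigma)$ is defined by $p\in eig_e(A)\iff O(e,p)\subseteq A$. *)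

From mathcomp Require Import all_boot.
From mathcomp Require Import boolp classical_sets.
Set Implicit Arguments. Unset Strict Implicit. Unset Printing Implicit Defensive.
Local Open Scope classical_set_scope.

Record entity := Entity {
  ent_E : Type;
  ent_Sigma : Type;
  ent_X : Type;
  ent_O : ent_E -> ent_Sigma -> set ent_X;
  ent_O_nonempty : forall e p, ent_O e p !=set0;
  ent_X_union : [set: ent_X] = \bigcup_(e in [set: ent_E]) \bigcup_(p in [set: ent_Sigma]) ent_O e p
}.

Definition Oe (S : entity) (e : ent_E S) : set (ent_X S) :=
  \bigcup_(p in [set: ent_Sigma S]) ent_O e p.

Definition eig (S : entity) (e : ent_E S) (A : set (ent_X S)) : set (ent_Sigma S) :=
  [set p | ent_O e p `<=` A].

Definition Fam (S : entity) (e : ent_E S) : set (set (ent_Sigma S)) :=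
  [set F | exists A : set (ent_X S), A `<=` Oe e /\ F = eig e A].

(* The map [P |-> \bigcup_(p in P) O(e,p)] is left adjoint to [eig_e], so the
   members of F(e) are exactly the fixed points [eig_e (\bigcup_(p in F) O(e,p)) = F]
   of the induced closure operator, and the fixed points of a closure operator
   contain the top element and are stable under intersections.  The empty set is
   a fixed point because every O(e,p) is nonempty. *)
From mathcomp Require Import all_boot.
From mathcomp Require Import boolp classical_sets.
Local Open Scope classical_set_scope.

Section Eigen.

Variables (S : entity) (e : ent_E S).

Definition outcomes (P : set (ent_Sigma S)) : set (ent_X S) :=
  \bigcup_(p in P) ent_O e p.

Lemma outcomes_subP (P : set (ent_Sigma S)) (A : set (ent_X S)) :
  outcomes P `<=` A <-> P `<=` eig e A.
Proof.
split=> [sPA p Pp x Opx | sPeig x [p Pp]]; last exact: sPeig.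
by apply: sPA; exists p.
Qed.

Lemma sub_eig_outcomes (P : set (ent_Sigma S)) : P `<=` eig e (outcomes P).
Proof. exact/outcomes_subP. Qed.

Lemma outcomes_sub_Oe (P : set (ent_Sigma S)) : outcomes P `<=` Oe e.
Proof. by move=> x [p _ Opx]; exists p. Qed.

Lemma subset_outcomes (P Q : set (ent_Sigma S)) :
  P `<=` Q -> outcomes P `<=` outcomes Q.
Proof. by move=> sPQ x [p Pp Opx]; exists p; first exact: sPQ. Qed.

Lemma subset_eig (A B : set (ent_X S)) : A `<=` B -> eig e A `<=` eig e B.
Proof. by move=> sAB p sOA; apply: subset_trans sAB. Qed.

Lemma eig_set0 : eig e set0 = set0.
Proof.
apply/seteqP; split=> // p Op0.
by have [x Opx] := ent_O_nonempty e p; exact: Op0 x Opx.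
Qed.

Lemma FamP (F : set (ent_Sigma S)) : Fam e F <-> eig e (outcomes F) `<=` F.
Proof.
split=> [[A [_ ->]] | closedF].
  by apply: subset_eig; apply/outcomes_subP.
exists (outcomes F); split; first exact: outcomes_sub_Oe.
by apply/seteqP; split; [exact: sub_eig_outcomes | exact: closedF].
Qed.

End Eigen.

Theorem mainTheorem10 (S : entity) (e : ent_E S) :
  Fam e set0 /\ Fam e [set: ent_Sigma S] /\
  (forall C : set (set (ent_Sigma S)), C `<=` Fam e ->
     Fam e (\bigcap_(F in C) F)).
Proof.
split; [|split].
- by apply/FamP; rewrite /outcomes bigcup_set0 eig_set0.
- exact/FamP.
- move=> C CFam; apply/FamP => p eig_p F CF.
  have /FamP closedF := CFam F CF.
  apply: closedF; apply: subset_eig eig_p.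
  by apply: subset_outcomes => q; apply.
Qed.
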